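(* Let $(H,+,\circ)$ be a commutative multiplicative hyperring with identity $1$, and let $P$ be a nonzero sdf-absorbing $\mathcal{C}$-hyperideal of $H$. Then $\mathrm{rad}(P)=P$.
   Context: A commutative multiplicative hyperring $(H,+,\circ)$ consists of an abelian group $(H,+)$ and a hyperoperation $\circ: H\times H\to P^*(H)$ (nonempty subsets) which is associative ($\bigcup_{a\in y\circ z}x\circ a=\bigcup_{b\in x\circ y}b\circ z$), commutative, satisfies $x\circ(y+z)\subseteq x\circ y+x\circ z$ and $x\circ(-y)=-(x\circ y)=(-x)\circ y$. For subsets $A,B$, $A\circ B=\bigcup_{a\in A,b\in B}a\circ b$ and $A\pm B=\{a\pm b: a\in A,b\in B\}$; $x^n=x\circ\cdots\circ x$ ($n$ factors). An identity $1$ satisfies $x\in x\circ 1$ for all $x$. A hyperideal is a nonempty $P\subseteq H$ with $x-y\in P$ and $r\circ x\subseteq P$ for all $x,y\in P$, $r\in H$. A proper hyperideal $P$ is prime if $x\circ y\subseteq P$ implies $x\in P$ or $y\in P$; $\mathrm{rad}(P)$ is the intersection of all prime hyperideals containing $P$ ($\mathrm{rad}(P)=H$ if there are none). Let $\mathcal{C}=\{c_1\circ\cdots\circ c_n: c_i\in H, n\in\mathbb{N}\}$; a hyperideal $P$ is a $\mathcal{C}$-hyperideal if for every $C\in\mathcal{C}$, $C\cap P\neq\varnothing$ implies $C\subseteq P$. A proper hyperideal $P$ is sdf-absorbing if whenever $0\neq x,y\in H$ and $x^2-y^2\subseteq P$, then $x-y\in P$ or $x+y\in P$. *)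

From HB Require Import structures.
From mathcomp Require Import all_boot all_algebra.
Set Implicit Arguments. Unset Strict Implicit. Unset Printing Implicit Defensive.
Import GRing.Theory.
Local Open Scope ring_scope.

(* A hyperoperation on a zmodType H is encoded as a ternary relation:
   hm x y z  <->  z \in x o y.  Subsets of H are predicates H -> Prop. *)
Section Hyperring.
Variable H : zmodType.
Variable hm : H -> H -> H -> Prop.

Definition is_comm_mult_hyperring : Prop :=
  (forall x y, exists z, hm x y z) /\
  (* associativity: U_{a in y o z} x o a = U_{b in x o y} b o z *)
  (forall x y z w, (exists a, hm y z a /\ hm x a w) <->
                   (exists b, hm x y b /\ hm b z w)) /\
  (forall x y w, hm x y w <-> hm y x w) /\
  (forall x y z w, hm x (y + z) w ->
     exists u v, hm x y u /\ hm x z v /\ w = u + v) /\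
  (forall x y w, hm x (- y) w <-> hm x y (- w)) /\
  (forall x y w, hm (- x) y w <-> hm x y (- w)).

Definition is_identity (one : H) : Prop := forall x, hm x one x.

Definition is_hyperideal (P : H -> Prop) : Prop :=
  (exists x, P x) /\
  (forall x y, P x -> P y -> P (x - y)) /\
  (forall r x w, P x -> hm r x w -> P w).

Definition is_proper_hyperideal (P : H -> Prop) : Prop :=
  is_hyperideal P /\ exists x, ~ P x.

Definition is_prime_hyperideal (P : H -> Prop) : Prop :=
  is_proper_hyperideal P /\
  (forall x y, (forall w, hm x y w -> P w) -> P x \/ P y).

(* rad(P): intersection of all prime hyperideals containing P
   (equal to H when there are none). *)
Definition hrad (P : H -> Prop) : H -> Prop :=
  fun x => forall Q, is_prime_hyperideal Q -> (forall y, P y -> Q y) -> Q x.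

Definition hsetmul (A B : H -> Prop) : H -> Prop :=
  fun w => exists a b, A a /\ B b /\ hm a b w.

(* c_1 o c_2 o ... o c_n  with c_1 = c and [c_2; ...; c_n] = cs  (n >= 1) *)
Fixpoint hprod (c : H) (cs : seq H) : H -> Prop :=
  match cs with
  | [::] => fun w => w = c
  | d :: ds => hsetmul (fun w => w = c) (hprod d ds)
  end.

(* C-hyperideal: for every C in the class of finite hyperproducts,
   C meets P implies C \subseteq P *)
Definition is_C_hyperideal (P : H -> Prop) : Prop :=
  is_hyperideal P /\
  (forall c cs, (exists z, hprod c cs z /\ P z) ->
                forall z, hprod c cs z -> P z).

(* sdf-absorbing: for nonzero x, y, x^2 - y^2 \subseteq P implies
   x - y \in P or x + y \in P *)
Definition is_sdf_absorbing (P : H -> Prop) : Prop :=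
  is_proper_hyperideal P /\
  (forall x y, x != 0 -> y != 0 ->
     (forall a b, hm x x a -> hm y y b -> P (a - b)) ->
     P (x - y) \/ P (x + y)).

End Hyperring.

From mathcomp Require Import all_boot all_algebra.
From mathcomp Require Import boolp classical_sets.
Set Implicit Arguments. Unset Strict Implicit. Unset Printing Implicit Defensive.
Import GRing.Theory.
Local Open Scope ring_scope.
Local Open Scope classical_set_scope.

(* Conversely, if no hyperpower x^n of
   x meets P, then the powers of x form a multiplicatively closed set disjoint
   from P, and Zorn's lemma yields a prime hyperideal containing P but not x;
   so every x in rad(P) has a hyperpower meeting P.  A C-hyperideal meeting
   x^(k+1) contains x^(k+1), hence by absorption every higher power, in
   particular x^(2k), which contains u o u for every u in x^k.  For a nonzero
   p in P the set u^2 - p^2 then lies in P, so sdf-absorption puts u - p or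
   u + p, hence u, in P: P meets x^k.  Descending to k = 1 gives x in P. *)

Section Hyperideals.
Variables (H : zmodType) (hm : H -> H -> H -> Prop) (P : H -> Prop).
Hypothesis hP : is_hyperideal hm P.

Lemma hideal0 : P 0.
Proof. by case: hP => [[z Pz] [PB _]]; rewrite -(subrr z); exact: PB. Qed.

Lemma hidealB x y : P x -> P y -> P (x - y).
Proof. by case: hP => _ [PB _]; exact: PB. Qed.

Lemma hidealN x : P x -> P (- x).
Proof. by move=> Px; rewrite -sub0r; exact: hidealB hideal0 Px. Qed.

Lemma hidealD x y : P x -> P y -> P (x + y).
Proof. by move=> Px Py; rewrite -[y]opprK; exact: hidealB Px (hidealN Py). Qed.

Lemma hidealMl r x w : P x -> hm r x w -> P w.
Proof. by case: hP => _ [_]; apply. Qed.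

End Hyperideals.

Section Hyperring.
Variables (H : zmodType) (hm : H -> H -> H -> Prop).
Hypothesis hr : is_comm_mult_hyperring hm.

Lemma hmul_nonempty x y : exists z, hm x y z.
Proof. by case: hr. Qed.

Lemma hmulA x y z w :
  (exists a, hm y z a /\ hm x a w) <-> (exists b, hm x y b /\ hm b z w).
Proof. by case: hr => _ []. Qed.

Lemma hmulC x y w : hm x y w -> hm y x w.
Proof. by case: hr => _ [_ [hC _]] /hC. Qed.

Lemma hmulDr x y z w :
  hm x (y + z) w -> exists u v, [/\ hm x y u, hm x z v & w = u + v].
Proof.
by case: hr => _ [_ [_ [hD _]]] /hD [u [v [xyu [xzv ->]]]]; exists u, v.
Qed.

Lemma hmulNl x y w : hm x y w -> hm (- x) y (- w).
Proof. by case: hr => _ [_ [_ [_ [_ hN]]]] xyw; apply/hN; rewrite opprK. Qed.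

Lemma hidealMr (P : H -> Prop) x r w :
  is_hyperideal hm P -> P x -> hm x r w -> P w.
Proof. by move=> hP Px /hmulC; exact: hidealMl. Qed.

(* [hpow x n] is the hyperpower x^(n+1): it has n+1 factors. *)
Definition hpow (x : H) (n : nat) : H -> Prop := hprod hm x (nseq n x).

Lemma hpow0 x z : hpow x 0 z <-> z = x.
Proof. by []. Qed.

Lemma hpowS x n z : hpow x n.+1 z <-> exists b, hpow x n b /\ hm x b z.
Proof.
split; first by move=> [_ [b [-> [xnb xbz]]]]; exists b.
by move=> [b [xnb xbz]]; exists x, b.
Qed.

Lemma hpow_nonempty x n : exists z, hpow x n z.
Proof.
elim: n => [|n [b xnb]]; first by exists x.
by have [z xbz] := hmul_nonempty x b; exists z; apply/hpowS; exists b.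
Qed.

Lemma hpowD x n m s t w :
  hpow x n s -> hpow x m t -> hm s t w -> hpow x (n + m).+1 w.
Proof.
elim: n s w => [|n IH] s w; first by move=> /hpow0 -> xmt xtw; apply/hpowS; exists t.
move=> /hpowS [s' [xns' xs's]] xmt stw.
have [a [s't_a xaw]] : exists a, hm s' t a /\ hm x a w by apply/hmulA; exists s.
by rewrite addSn; apply/hpowS; exists a; split; [exact: IH xns' xmt s't_a|].
Qed.

Inductive hideal_adjoin (Q : H -> Prop) (a : H) : H -> Prop :=
| hideal_adjoin_base q : Q q -> hideal_adjoin Q a q
| hideal_adjoin_addM z r e :
    hideal_adjoin Q a z -> hm r a e -> hideal_adjoin Q a (z + e).

Section Adjoin.
Variables (Q : H -> Prop) (a : H).
Hypothesis hQ : is_hyperideal hm Q.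

Lemma hideal_adjoinB z1 z2 :
  hideal_adjoin Q a z1 -> hideal_adjoin Q a z2 -> hideal_adjoin Q a (z1 - z2).
Proof.
move=> adj1; elim=> [q Qq|z r e _ IH rae].
- elim: adj1 => [q' Qq'|z r e _ IH rae].
  + exact: hideal_adjoin_base (hidealB hQ Qq' Qq).
  + by rewrite addrAC; exact: hideal_adjoin_addM IH rae.
- by rewrite opprD addrA; exact: hideal_adjoin_addM IH (hmulNl rae).
Qed.

Lemma hideal_adjoinMl y z w : hideal_adjoin Q a z -> hm y z w -> hideal_adjoin Q a w.
Proof.
move=> adj; elim: adj w => [q Qq|z' r e _ IH rae] w.
  by move=> yqw; exact: hideal_adjoin_base (hidealMl hQ Qq yqw).
move=> /hmulDr [u [v [yz'u yev ->]]].
have [c [yrc cav]] : exists c, hm y r c /\ hm c a v by apply/hmulA; exists e.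
exact: hideal_adjoin_addM (IH _ yz'u) cav.
Qed.

Lemma hideal_adjoin_hideal : is_hyperideal hm (hideal_adjoin Q a).
Proof.
split; last by split; [exact: hideal_adjoinB | exact: hideal_adjoinMl].
by exists 0; apply: hideal_adjoin_base; exact: hideal0 hQ.
Qed.

Lemma hideal_adjoin_mem one : is_identity hm one -> hideal_adjoin Q a a.
Proof.
move=> one_id; rewrite -{2}[a]add0r.
exact: hideal_adjoin_addM (hideal_adjoin_base a (hideal0 hQ)) (hmulC (one_id a)).
Qed.

Lemma hideal_adjoinMr_sub y :
  (forall w, hm a y w -> Q w) ->
  forall z, hideal_adjoin Q a z -> forall w, hm z y w -> Q w.
Proof.
move=> ay_sub z; elim=> [q Qq|z' r e _ IH rae] w.
  exact: hidealMr hQ Qq.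
move=> /hmulC /hmulDr [u [v [yz'u yev ->]]].
apply: (hidealD hQ (IH _ (hmulC yz'u))).
have [c [yrc cav]] : exists c, hm y r c /\ hm c a v by apply/hmulA; exists e.
have [d [yad rdv]] : exists d, hm y a d /\ hm r d v.
  by apply/hmulA; exists c; split; [exact: hmulC|].
exact: (hidealMl hQ (ay_sub _ (hmulC yad)) rdv).
Qed.

End Adjoin.

Section PrimeAvoidance.
Variables (one : H) (P S : H -> Prop).
Hypotheses (one_id : is_identity hm one) (hP : is_hyperideal hm P).
Hypotheses (S_nonempty : exists s, S s) (SP : forall z, S z -> ~ P z).
Hypothesis S_mul : forall s t w, S s -> S t -> hm s t w -> S w.

Definition avoiding (A : H -> Prop) : Prop :=
  [/\ is_hyperideal hm A, P `<=` A & forall z, S z -> ~ A z].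

(* [set0] joins the family only because [Zorn_bigcup] also needs the union of
   the empty chain in it. *)
Lemma avoiding_bigcup (F : set (set H)) :
  F `<=` (fun A => A = set0 \/ avoiding A) -> total_on F subset ->
  \bigcup_(X in F) X = set0 \/ avoiding (\bigcup_(X in F) X).
Proof.
move=> FA Ftot.
have [[z [X FX Xz]]|U0] := pselect (exists z, (\bigcup_(X in F) X) z); last first.
  by left; apply/seteqP; split=> // z Uz; apply: U0; exists z.
have avF Y y : F Y -> Y y -> avoiding Y by move=> /FA [-> //|].
have [_ PX _] := avF X z FX Xz.
right; split; [split; [by exists z, X|split]| |].
- move=> y1 y2 [Y1 FY1 Y1y] [Y2 FY2 Y2y].
  have [hY1 _ _] := avF _ _ FY1 Y1y; have [hY2 _ _] := avF _ _ FY2 Y2y.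
  have [Y12|Y21] := Ftot _ _ FY1 FY2.
  + by exists Y2; last exact: (hidealB hY2 (Y12 y1 Y1y) Y2y).
  + by exists Y1; last exact: (hidealB hY1 Y1y (Y21 y2 Y2y)).
- move=> r y w [Y FY Yy] ryw; exists Y => //.
  by have [hY _ _] := avF _ _ FY Yy; exact: (hidealMl hY Yy ryw).
- by move=> y /PX Xy; exists X.
- by move=> s Ss [Y FY Ys]; have [_ _ SY] := avF _ _ FY Ys; exact: SY Ss Ys.
Qed.

Lemma exists_maximal_avoiding :
  exists A, avoiding A /\ forall B, A `<` B -> ~ avoiding B.
Proof.
have avP : avoiding P by split.
have [A [[A0|avA] Amax]] := Zorn_bigcup avoiding_bigcup.
- exfalso; apply: (Amax P); last by right.
  rewrite A0; split=> // P0; have [[p Pp] _] := hP; exact: P0 p Pp.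
- by exists A; split=> // B AB avB; apply: Amax AB _; right.
Qed.

Lemma maximal_avoiding_prime A :
  avoiding A -> (forall B, A `<` B -> ~ avoiding B) -> is_prime_hyperideal hm A.
Proof.
move=> [hA PA SA] Amax; split.
  by split=> //; have [s Ss] := S_nonempty; exists s; exact: SA.
move=> a b ab_sub; apply: contrapT => /not_orP [nAa nAb].
have adjoin_meets c : ~ A c -> exists s, S s /\ hideal_adjoin A c s.
  move=> nAc; apply: contrapT => /forallNP no_s.
  apply: (Amax (hideal_adjoin A c)).
    split=> [y|sub]; first exact: hideal_adjoin_base.
    by apply: nAc; apply: sub; exact: hideal_adjoin_mem one_id.
  split; first exact: hideal_adjoin_hideal.
    by move=> y /PA; exact: hideal_adjoin_base.
  by move=> s Ss adj; apply: (no_s s).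
have [s [Ss adj_s]] := adjoin_meets a nAa.
have [t [St adj_t]] := adjoin_meets b nAb.
have [w stw] := hmul_nonempty s t.
have sb_sub w' : hm b s w' -> A w'.
  by move=> /hmulC; exact: (hideal_adjoinMr_sub hA ab_sub adj_s).
exact: SA (S_mul Ss St stw) (hideal_adjoinMr_sub hA sb_sub adj_t (hmulC stw)).
Qed.

Lemma exists_prime_avoiding :
  exists Q, [/\ is_prime_hyperideal hm Q, P `<=` Q & forall z, S z -> ~ Q z].
Proof.
have [A [avA Amax]] := exists_maximal_avoiding.
have [_ PA SA] := avA.
by exists A; split=> //; exact: maximal_avoiding_prime.
Qed.

End PrimeAvoidance.

Lemma hrad_hpow (one : H) (P : H -> Prop) x :
  is_identity hm one -> is_hyperideal hm P ->
  hrad hm P x -> exists n z, hpow x n z /\ P z.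
Proof.
move=> one_id hP xrad; apply: contrapT => no_pow.
pose S z := exists n, hpow x n z.
have SP z : S z -> ~ P z by move=> [n xnz] Pz; apply: no_pow; exists n, z.
have S_mul s t w : S s -> S t -> hm s t w -> S w.
  by move=> [n xns] [m xmt] stw; exists (n + m).+1; exact: hpowD xns xmt stw.
have Sx : S x by exists 0%N.
have [Q [pQ PQ SQ]] := exists_prime_avoiding one_id hP (ex_intro S x Sx) SP S_mul.
exact: SQ x Sx (xrad Q pQ PQ).
Qed.

Section SdfAbsorbing.
Variable P : H -> Prop.
Hypotheses (hsdf : is_sdf_absorbing hm P) (hC : is_C_hyperideal hm P).

Lemma hpow_sub_C_hideal_mono x m n :
  (forall w, hpow x m w -> P w) -> (m <= n)%N -> forall w, hpow x n w -> P w.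
Proof.
move=> xm_sub; rewrite leq_eqVlt => /orP [/eqP <- //|/subnK <-].
rewrite addnS addnC; set d := (n - m.+1)%N.
have [s xms] := hpow_nonempty x m; have [t xdt] := hpow_nonempty x d.
have [w0 stw0] := hmul_nonempty s t.
apply: (hC.2 x (nseq (m + d).+1 x)); exists w0; split.
- exact: hpowD xms xdt stw0.
- exact: hidealMr hC.1 (xm_sub _ xms) stw0.
Qed.

Lemma sdf_mem_of_sq_sub p u : P p -> p != 0 -> (forall a, hm u u a -> P a) -> P u.
Proof.
move=> Pp p_neq0 uu_sub; have [[hP _] sdf] := hsdf.
have [->|u_neq0] := eqVneq u 0; first exact: hideal0 hP.
have [upP|upP] : P (u - p) \/ P (u + p).
  apply: sdf => // a b uua ppb.
  exact: (hidealB hP (uu_sub _ uua) (hidealMl hP Pp ppb)).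
- by rewrite -(subrK p u); exact: (hidealD hP upP Pp).
- by rewrite -(addrK p u); exact: (hidealB hP upP Pp).
Qed.

Lemma sdf_hpow_mem p x n z : P p -> p != 0 -> hpow x n z -> P z -> P x.
Proof.
move=> Pp p_neq0; elim: n z => [z /hpow0 -> //|k IH z xkz Pz].
have xk1_sub w : hpow x k.+1 w -> P w by apply: (hC.2 x (nseq k.+1 x)); exists z.
have [u xku] := hpow_nonempty x k.
apply: (IH u xku); apply: (sdf_mem_of_sq_sub Pp p_neq0) => a uua.
apply: (hpow_sub_C_hideal_mono xk1_sub _ (hpowD xku xku uua)).
by rewrite ltnS leq_addl.
Qed.

End SdfAbsorbing.

End Hyperring.

Theorem mainTheorem1 (H : zmodType) (hm : H -> H -> H -> Prop) (one : H)
  (P : H -> Prop) :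
  is_comm_mult_hyperring hm ->
  is_identity hm one ->
  (exists x, P x /\ x != 0) ->
  is_sdf_absorbing hm P ->
  is_C_hyperideal hm P ->
  forall x, hrad hm P x <-> P x.
Proof.
move=> hr one_id [p [Pp p_neq0]] hsdf hC x; split; last by move=> Px Q _; apply.
move=> /(hrad_hpow hr one_id hC.1) [n [z [xnz Pz]]].
exact: (sdf_hpow_mem hr hsdf hC Pp p_neq0 xnz Pz).
Qed.
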